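(* Let $X$ be a $T_0$ space, $U$ an $SI_2$-open subset of $X$, $x\in X$, and let $\mathcal F$ be a family of sets of the form $\uparrow F$ with $F$ a nonempty finite subset of $X$, such that $\mathcal F$ is an irreducible subset of $P_S(X)$. If $\bigcap\mathcal F\subseteq\uparrow x\subseteq U$, then $F\subseteq U$ for some $\uparrow F\in\mathcal F$.
   Context: For a $T_0$ space $X$, the specialization order is $x\le y$ iff $x\in \mathrm{cl}\{y\}$; $\uparrow A=\{x: a\le x\text{ for some } a\in A\}$, $\uparrow x=\uparrow\{x\}$. $A^\uparrow$ and $A^\downarrow$ are the sets of upper and lower bounds of $A$, and $A^\delta=(A^\uparrow)^\downarrow$. A nonempty $A\subseteq X$ is irreducible if whenever $A\subseteq F_1\cup F_2$ with $F_1,F_2$ closed, $A\subseteq F_1$ or $A\subseteq F_2$. $P_S(X)$ is the set of nonempty compact saturated (upper) subsets of $X$ with the upper Vietoris topology, having basis $\{\square V: V \text{ open}\}$, $\square V=\{Q: Q\subseteq V\}$ (for finite $F$, $\uparrow F$ is such a set). A subset $U\subseteq X$ is $SI_2$-open if $U$ is open and for every irreducible $F\subseteq X$, $F^\delta\cap U\neq\emptyset$ implies $F\cap U\ne\emptyset$. *)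

From HB Require Import structures.
From mathcomp Require Import all_boot all_order all_algebra.
From mathcomp Require Import all_classical all_reals all_analysis.
Set Implicit Arguments. Unset Strict Implicit. Unset Printing Implicit Defensive.
Local Open Scope classical_set_scope.

Section Defs.
Context {X : topologicalType}.

Definition spec (x y : X) : Prop := closure [set y] x.

Definition up (A : set X) : set X := [set x | exists2 a, A a & spec a x].

(* saturated = upper set w.r.t. specialization order *)
Definition upper_set (A : set X) : Prop := forall x y, A x -> spec x y -> A y.

Definition upper_bounds (A : set X) : set X := [set u | forall a, A a -> spec a u].
Definition lower_bounds (A : set X) : set X := [set l | forall a, A a -> spec l a].
Definition delta (A : set X) : set X := lower_bounds (upper_bounds A).

Definition irreducible (A : set X) : Prop :=
  A !=set0 /\ forall F1 F2 : set X, closed F1 -> closed F2 ->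
    A `<=` F1 `|` F2 -> A `<=` F1 \/ A `<=` F2.

Definition SI2_open (U : set X) : Prop :=
  open U /\ forall F : set X, irreducible F ->
    delta F `&` U !=set0 -> F `&` U !=set0.

Definition PS : set (set X) := [set Q | Q !=set0 /\ compact Q /\ upper_set Q].

(* basic open sets of the upper Vietoris topology *)
Definition box (V : set X) : set (set X) := [set Q | PS Q /\ Q `<=` V].

Definition uV_open (W : set (set X)) : Prop :=
  W `<=` PS /\ forall Q, W Q -> exists V : set X, [/\ open V, Q `<=` V & box V `<=` W].

Definition uV_closed (C : set (set X)) : Prop := C `<=` PS /\ uV_open (PS `\` C).

Definition PS_irreducible (A : set (set X)) : Prop :=
  A `<=` PS /\ A !=set0 /\ forall C1 C2 : set (set X), uV_closed C1 -> uV_closed C2 ->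
    A `<=` C1 `|` C2 -> A `<=` C1 \/ A `<=` C2.

End Defs.

(** Suppose no generator [F] of a member of [calF] lies in [U]. *)

From mathcomp Require Import all_boot all_order all_algebra.
From mathcomp Require Import all_classical all_reals all_analysis.
Local Open Scope classical_set_scope.

Section Specialization.
Context {X : topologicalType}.

Lemma spec_refl (a : X) : spec a a.
Proof. exact: subset_closure. Qed.

Lemma open_spec (V : set X) a y : open V -> V a -> spec a y -> V y.
Proof.
move=> oV Va ay; have aV : nbhs a V by exact: open_nbhs_nbhs.
by have [z [-> Vz]] := ay V aV.
Qed.

Lemma closed_spec (C : set X) a y : closed C -> C y -> spec a y -> C a.
Proof. by move=> cC Cy ay; apply: cC; apply: closureS ay => z ->. Qed.

Lemma spec_trans (a b c : X) : spec a b -> spec b c -> spec a c.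
Proof. by move=> ab bc; apply: closed_spec ab; [exact: closed_closure|]. Qed.

Lemma sub_up (F : set X) : F `<=` up F.
Proof. by move=> a Fa; exists a => //; exact: spec_refl. Qed.

Lemma up_upper_set (F : set X) : upper_set (up F).
Proof. by move=> y z [a Fa ay] yz; exists a => //; exact: spec_trans yz. Qed.

Lemma up_sub_open {F V : set X} : open V -> F `<=` V -> up F `<=` V.
Proof. by move=> oV FV y [a /FV Va ay]; exact: open_spec ay. Qed.

End Specialization.

Lemma finite_sub_chain_bigcup {T : eqType} {Ch : set (set T)} {V F : set T} :
  finite_set F -> total_on Ch subset -> Ch !=set0 ->
  F `<=` \bigcup_(W in Ch) W `|` V -> exists2 W, Ch W & F `<=` W `|` V.
Proof.
move=> /finite_seqP[s ->] {F} Chtot [W0 ChW0].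
elim: s => [|a s IH] sV; first by exists W0 => // y.
have s_as : [set` s] `<=` [set` a :: s] by move=> y /= ys; rewrite in_cons ys orbT.
have [W ChW sW] := IH (subset_trans s_as sV).
have [[Wa ChWa Waa]|Va] := sV a (mem_head a s); last first.
  by exists W => // y; rewrite /= in_cons => /orP[/eqP -> | /sW]; [right|].
have [WaW|WWa] := Chtot _ _ ChWa ChW.
  by exists W => // y; rewrite /= in_cons => /orP[/eqP -> | /sW]; [left; exact: WaW|].
exists Wa => // y; rewrite /= in_cons => /orP[/eqP -> | /sW[/WWa|]]; by [left|right].
Qed.

Lemma uV_closed_meets {X : topologicalType} (K : set X) :
  closed K -> uV_closed [set Q | PS Q /\ Q `&` K !=set0].
Proof.
move=> cK; split; first by move=> Q [].
split; first by move=> Q [].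
move=> Q [PQ QK]; exists (~` K); split; first exact: closed_openC.
  by move=> y Qy Ky; apply: QK; split=> //; exists y.
by move=> Q' [PQ' Q'K]; split=> // -[_ [y [/Q'K]]].
Qed.

Definition transversal {X : topologicalType} (calF : set (set X)) (C : set X) :=
  forall A, calF A -> A `&` C !=set0.

Section Transversal.
Context {X : topologicalType} {calF : set (set X)}.

Lemma transversal_irreducible {C : set X} : PS_irreducible calF ->
  closed C -> transversal calF C ->
  (forall D, closed D -> D `<=` C -> transversal calF D -> C `<=` D) ->
  irreducible C.
Proof.
move=> [calF_PS [[A0 FA0] calF_irr]] cC trC minC; split.
  by have [y [_ Cy]] := trC A0 FA0; exists y.
pose meets K := [set Q : set X | PS Q /\ Q `&` (C `&` K) !=set0].
have meets_closed K : closed K -> uV_closed (meets K).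
  by move=> cK; apply: uV_closed_meets; exact: closedI.
have C_sub K : closed K -> calF `<=` meets K -> C `<=` K.
  move=> cK FK y Cy; suff [] : (C `&` K) y by [].
  apply: minC Cy; [exact: closedI | by move=> z [] | by move=> A /FK[]].
move=> F1 F2 cF1 cF2 CF.
have cover : calF `<=` meets F1 `|` meets F2.
  move=> A FA; have [y [Ay Cy]] := trC A FA.
  by case: (CF y Cy) => Fy; [left|right]; split; try exact: calF_PS; exists y.
case: (calF_irr _ _ (meets_closed _ cF1) (meets_closed _ cF2) cover) => sub.
  by left; exact: C_sub sub.
by right; exact: C_sub sub.
Qed.

Lemma upper_bounds_transversal {C : set X} :
  (forall A, calF A -> upper_set A) -> transversal calF C ->
  upper_bounds C `<=` \bigcap_(A in calF) A.
Proof.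
by move=> calF_up trC u uC A FA; have [c [Ac Cc]] := trC A FA; exact: calF_up (uC c Cc).
Qed.

Hypothesis calF_fin : forall A, calF A -> exists2 F, finite_set F & A = up F.

Lemma transversalD_chain_bigcup (C0 : set X) (Ch : set (set X)) :
  closed C0 -> transversal calF C0 ->
  (forall W, Ch W -> open W /\ transversal calF (C0 `\` W)) -> total_on Ch subset ->
  transversal calF (C0 `\` \bigcup_(W in Ch) W).
Proof.
move=> cC0 trC0 ChP Chtot A FA.
have [->|/set0P ChN0] := eqVneq Ch set0.
  by rewrite bigcup_set0 setD0; exact: trC0.
apply: contrapT => noA; have [F fF AF] := calF_fin A FA.
have FV : F `<=` \bigcup_(W in Ch) W `|` ~` C0.
  move=> y /sub_up; rewrite -AF => Ay; apply: contrapT => /not_orP[nW nC0].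
  by apply: noA; exists y; split=> //; split=> //; exact: contrapT.
have [W ChW FW] := finite_sub_chain_bigcup fF Chtot ChN0 FV.
have [oW trW] := ChP W ChW.
have [y [Ay [C0y nWy]]] := trW A FA.
have := up_sub_open (openU oW (closed_openC cC0)) FW.
by rewrite -AF => /(_ y Ay) [].
Qed.

Lemma exists_minimal_closed_transversal {C0 : set X} :
  closed C0 -> transversal calF C0 ->
  exists C, [/\ closed C, C `<=` C0, transversal calF C &
    forall D, closed D -> D `<=` C -> transversal calF D -> C `<=` D].
Proof.
move=> cC0 trC0; pose P W := open W /\ transversal calF (C0 `\` W).
have [W [[oW trW] Wmax]] : exists W, P W /\ forall W', W `<` W' -> ~ P W'.
  apply: Zorn_bigcup => Ch ChP Chtot; split.
    by apply: bigcup_open => W /ChP[].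
  exact: transversalD_chain_bigcup.
exists (C0 `\` W); split=> [||//|].
- by apply: closedI => //; exact: open_closedC.
- exact: subDsetl.
move=> D cD DC trD y [C0y nWy]; apply: contrapT => nDy.
have PD : P (~` D).
  split; first exact: closed_openC.
  move=> A /trD[z [Az Dz]]; exists z; split=> //; split; first exact: (DC z Dz).1.
  by move=> /(_ Dz).
have WD : W `<=` ~` D by move=> z Wz /DC[].
have DW : ~` D `<=` W by apply: contrapT => nDW; exact: Wmax (~` D) (conj WD nDW) PD.
exact: nWy (DW y nDy).
Qed.

End Transversal.

Theorem proposition2p9 (X : topologicalType) (hT0 : kolmogorov_space X)
  (U : set X) (x : X) (calF : set (set X)) :
  SI2_open U ->
  (forall A, calF A -> exists F : set X, [/\ finite_set F, F !=set0 & A = up F]) ->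
  PS_irreducible calF ->
  \bigcap_(A in calF) A `<=` up [set x] ->
  up [set x] `<=` U ->
  exists F : set X, [/\ finite_set F, F !=set0, calF (up F) & F `<=` U].
Proof.
move=> [oU SI2U] calF_gen calF_irr calF_x xU.
apply: contrapT => noF.
have calF_fin A : calF A -> exists2 F, finite_set F & A = up F.
  by case/calF_gen => F [fF _ ->]; exists F.
have calF_up A : calF A -> upper_set A by case/calF_fin => F _ ->; exact: up_upper_set.
have trCU : transversal calF (~` U).
  move=> A FA; apply/set0P/eqP => /subsets_disjoint AU.
  have [F [fF F0 AF]] := calF_gen A FA.
  apply: noF; exists F; split=> //; first by rewrite -AF.
  by apply: subset_trans AU; rewrite AF; exact: sub_up.
have [C [cC CU trC minC]] :=
  exists_minimal_closed_transversal calF_fin (open_closedC oU) trCU.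
have [y [Cy Uy]] : C `&` U !=set0.
  apply: SI2U; first exact: transversal_irreducible calF_irr cC trC minC.
  exists x; split; last by apply: xU; exact: sub_up.
  move=> u /(upper_bounds_transversal calF_up trC) /calF_x.
  by case=> _ ->.
exact: CU y Cy Uy.
Qed.
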